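(* Fix $\eta>0$. Consider the following game between Learner, Reality and $N$ experts. At each step $t=1,2,\dots$: each Expert $n$ ($n=1,\dots,N$) announces a prediction $\gamma_t^n\in[0,1]$ and a loss function $\lambda_t^n\in\mathcal{L}$ that is required to be $\eta$-mixable; then Learner announces $\pi_t\in[0,1]$; then Reality announces $\omega_t\in\{0,1\}$. Learner has a strategy that guarantees, for all $T\ge1$ and all $n=1,\dots,N$, $$\sum_{t=1}^T\lambda_t^n(\pi_t,\omega_t)\le\sum_{t=1}^T\lambda_t^n(\gamma_t^n,\omega_t)+\frac{\ln N}{\eta}.$$
   Context: A loss function is a map $\lambda:[0,1]\times\{0,1\}\to[0,\infty]$ satisfying: (1) $\lambda(\gamma,0)$ and $\lambda(\gamma,1)$ are continuous in $\gamma\in[0,1]$ (with the standard topology on $[0,\infty]$); (2) there exists $\gamma$ with $\lambda(\gamma,0),\lambda(\gamma,1)$ both finite; (3) there is no $\gamma$ with both infinite. The superprediction set is $\Sigma_\lambda=\{(x,y)\in[0,\infty)^2:\exists\gamma\ \lambda(\gamma,0)\le x,\ \lambda(\gamma,1)\le y\}$. For $\eta>0$, $\lambda$ is $\eta$-mixable if $\{(e^{-\eta x},e^{-\eta y}):(x,y)\in\Sigma_\lambda\}$ is convex; mixable if $\eta$-mixable for some $\eta>0$. $\lambda$ is proper if $\pi\lambda(\pi,1)+(1-\pi)\lambda(\pi,0)\le\pi\lambda(\pi',1)+(1-\pi)\lambda(\pi',0)$ for all $\pi,\pi'\in[0,1]$. $\mathcal{L}$ is the set of loss functions that are both mixable and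 proper. *)

From HB Require Import structures.
From mathcomp Require Import all_boot all_order all_algebra.
From mathcomp Require Import all_classical all_reals all_analysis.
Set Implicit Arguments. Unset Strict Implicit. Unset Printing Implicit Defensive.
Import Order.TTheory GRing.Theory Num.Theory.
Import numFieldNormedType.Exports.
Local Open Scope classical_set_scope.
Local Open Scope ring_scope.

(* A (candidate) loss function: lam gamma omega, with omega : bool
   (false = 0, true = 1) and values in \bar R; only gamma in [0,1] matters. *)
Definition lossfun (R : realType) := R -> bool -> \bar R.

Definition in01 (R : realType) (x : R) : Prop := 0 <= x <= 1.

Definition is_loss (R : realType) (lam : lossfun R) : Prop :=
  [/\ (forall g b, in01 g -> (0 <= lam g b)%E),
      (forall b, {within `[0, 1], continuous (fun g => lam g b)}),
      (exists g, in01 g /\ lam g false \is a fin_num /\ lam g true \is a fin_num)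
    & ~ (exists g, in01 g /\ lam g false = +oo%E /\ lam g true = +oo%E)].

Definition superpred (R : realType) (lam : lossfun R) : set (R * R) :=
  [set p | 0 <= p.1 /\ 0 <= p.2 /\
     exists g, in01 g /\ (lam g false <= p.1%:E)%E /\ (lam g true <= p.2%:E)%E].

Definition convex_set2 (R : realType) (S : set (R * R)) : Prop :=
  forall u v, S u -> S v -> forall a : R, in01 a ->
    S (a * u.1 + (1 - a) * v.1, a * u.2 + (1 - a) * v.2).

Definition mixable_at (R : realType) (eta : R) (lam : lossfun R) : Prop :=
  convex_set2 [set (expR (- (eta * p.1)), expR (- (eta * p.2))) | p in superpred lam].

Definition mixable (R : realType) (lam : lossfun R) : Prop :=
  exists eta : R, 0 < eta /\ mixable_at eta lam.

Definition proper_loss (R : realType) (lam : lossfun R) : Prop :=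
  forall p p' : R, in01 p -> in01 p' ->
    (p%:E * lam p true + (1 - p)%:E * lam p false <=
     p%:E * lam p' true + (1 - p)%:E * lam p' false)%E.

Definition in_L (R : realType) (lam : lossfun R) : Prop :=
  [/\ is_loss lam, mixable lam & proper_loss lam].

Definition experts_move (R : realType) (N : nat) := ('I_N -> R * lossfun R)%type.
Definition round (R : realType) (N : nat) := (experts_move R N * bool)%type.

(* A Learner strategy maps the history of past rounds (experts' moves and
   outcomes; Learner's own past moves are determined by the strategy) and
   the current experts' move to a prediction. *)
Definition strategy (R : realType) (N : nat) :=
  seq (round R N) -> experts_move R N -> R.

(* Rounds are indexed t = 0, 1, 2, ... *)
Definition history (R : realType) (N : nat) (gam : nat -> 'I_N -> R)
  (lam : nat -> 'I_N -> lossfun R) (om : nat -> bool) (t : nat) : seq (round R N) :=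
  [seq ((fun n => (gam s n, lam s n)), om s) | s <- iota 0 t].

Definition learner_pred (R : realType) (N : nat) (S : strategy R N)
  (gam : nat -> 'I_N -> R) (lam : nat -> 'I_N -> lossfun R) (om : nat -> bool)
  (t : nat) : R :=
  S (history gam lam om t) (fun n => (gam t n, lam t n)).


(* Write [e_b(x) = exp (- eta * lambda(x, b))], with [exp (-oo) = 0].
   Mixability puts every mixture of the points [e(g)] and [e(p)] into the
   exponentiated superprediction set, and properness says no point of the
   superprediction set has smaller expected loss under [p] than [lambda(p, .)];
   differentiating at mixing weight 0 gives
     (1 - p) e_0(g) / e_0(p) + p e_1(g) / e_1(p) <= 1.
   Summed with the Aggregating Algorithm weights [w_n], the functions
   [S_b(p) = sum_n w_n e^n_b(gamma^n) / e^n_b(p)] satisfy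
   [(1 - p) S_0(p) + p S_1(p) <= sum_n w_n], so at an endpoint or, by the
   intermediate value theorem, where [S_0 = S_1] some [p] has both
   [S_b(p) <= sum_n w_n].  Predicting such a [p] and updating
   [w_n := w_n e^n(gamma^n) / e^n(p)] keeps the total weight at most [N], while
   after [T] rounds [w_n = exp (eta (Loss_T - Loss^n_T))]. *)

From HB Require Import structures.
From mathcomp Require Import all_boot all_order all_algebra.
From mathcomp Require Import all_classical all_reals all_analysis.
From mathcomp Require Import ring lra.
Set Implicit Arguments. Unset Strict Implicit. Unset Printing Implicit Defensive.
Import Order.TTheory GRing.Theory Num.Theory.
Import numFieldNormedType.Exports.
Local Open Scope classical_set_scope.
Local Open Scope ring_scope.

Section FirstOrder.
Variable R : realType.

Lemma subr1V_le_ln (z : R) : 0 < z -> 1 - z^-1 <= ln z.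
Proof.
move=> z0; have : -1 < z^-1 - 1 by rewrite ltrBrDr addrC subrr invr_gt0.
by move/le_ln1Dx; rewrite addrC subrK lnV ?posrE //; lra.
Qed.

Lemma le0_of_affine_le0 (c d : R) :
  (forall e, 0 < e <= 1 -> c + e * d <= 0) -> c <= 0.
Proof.
move=> H; have [d0|d0] := leP 0 d.
  by have := H 1; rewrite ltr01 lexx => /(_ isT); lra.
rewrite leNgt; apply/negP => c0.
pose e := Num.min 1 (c / (- d * 2)).
have e0 : 0 < e by rewrite lt_min ltr01 divr_gt0 // mulr_gt0 // oppr_gt0.
have e1 : e <= 1 by rewrite ge_min lexx.
have ed : e * (- d * 2) <= c.
  by rewrite -ler_pdivlMr ?mulr_gt0 ?oppr_gt0 // ge_min lexx orbT.
by have := H e (introT andP (conj e0 e1)); nra.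
Qed.

(* By [ln z >= 1 - 1/z] the hypothesis gives [(1 - p) s0 + p s1 + e s0 s1 <= 0]
   for every [e] in ]0, 1]; letting [e] go to 0 bounds the slope at 0. *)
Lemma slope_le0_of_ln_mix_le0 (p s0 s1 : R) : 0 <= p <= 1 -> -1 < s0 -> -1 < s1 ->
  (forall e, 0 < e <= 1 ->
     (1 - p) * ln (1 + e * s0) + p * ln (1 + e * s1) <= 0) ->
  (1 - p) * s0 + p * s1 <= 0.
Proof.
move=> /andP[p0 p1] s0g s1g H; apply: (@le0_of_affine_le0 _ (s0 * s1)).
move=> e /andP[e0 e1]; set z0 := 1 + e * s0; set z1 := 1 + e * s1.
have z0g : 0 < z0 by rewrite /z0; nra.
have z1g : 0 < z1 by rewrite /z1; nra.
have hV : (1 - p) * (1 - z0^-1) + p * (1 - z1^-1) <= 0.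
  apply: le_trans (H e (introT andP (conj e0 e1))).
  by apply: lerD; apply: ler_wpM2l; rewrite ?subr_ge0 // subr1V_le_ln.
have -> : (1 - p) * s0 + p * s1 + e * (s0 * s1)
    = (z0 * z1 * ((1 - p) * (1 - z0^-1) + p * (1 - z1^-1))) / e.
  by rewrite /z0 /z1; field; rewrite -/z0 -/z1 !gt_eqF.
by rewrite pmulr_lle0 ?invr_gt0 // pmulr_rle0 // mulr_gt0.
Qed.

Lemma mix_first_order (p u0 u1 a0 a1 : R) : 0 <= p <= 1 ->
  0 < u0 -> 0 < u1 -> 0 < a0 -> 0 < a1 ->
  (forall e, 0 < e <= 1 ->
     (1 - p) * ln (e * a0 + (1 - e) * u0) + p * ln (e * a1 + (1 - e) * u1)
     <= (1 - p) * ln u0 + p * ln u1) ->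
  (1 - p) * a0 * u1 + p * a1 * u0 <= u0 * u1.
Proof.
move=> p01 u0g u1g a0g a1g H.
have ratio_gt (u a : R) : 0 < u -> 0 < a -> -1 < a / u - 1.
  by move=> ug ag; rewrite ltrBrDr addrC subrr divr_gt0.
have lnmixE (u a e : R) : 0 < u -> 0 < a -> 0 < e <= 1 ->
    ln (e * a + (1 - e) * u) = ln u + ln (1 + e * (a / u - 1)).
  move=> ug ag /andP[e0 e1]; have ua := divr_gt0 ag ug.
  have -> : e * a + (1 - e) * u = u * (1 + e * (a / u - 1)).
    by field; rewrite gt_eqF.
  by rewrite lnM ?posrE //; nra.
have : (1 - p) * (a0 / u0 - 1) + p * (a1 / u1 - 1) <= 0.
  apply: slope_le0_of_ln_mix_le0 => //; try exact: ratio_gt.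
  by move=> e e01; have := H e e01; rewrite !lnmixE //; lra.
have -> : (1 - p) * (a0 / u0 - 1) + p * (a1 / u1 - 1)
    = ((1 - p) * a0 * u1 + p * a1 * u0 - u0 * u1) / (u0 * u1).
  by field; rewrite !gt_eqF.
by rewrite pmulr_lle0 ?invr_gt0 ?mulr_gt0 // subr_le0.
Qed.
End FirstOrder.

Lemma in01_0 {R : realType} : in01 (0 : R). Proof. by rewrite /in01 lexx ler01. Qed.

Lemma in01_1 {R : realType} : in01 (1 : R). Proof. by rewrite /in01 lexx ler01. Qed.

Section UnitInterval.
Variable R : realType.

Lemma in01_oo (p : R) : 0 < p < 1 -> in01 p.
Proof. by case/andP => p0 p1; rewrite /in01 (ltW p0) (ltW p1). Qed.

Lemma in01_oo_neq (p : R) : in01 p -> p != 0 -> p != 1 -> 0 < p < 1.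
Proof. by case/andP => p0 p1 pn0 pn1; rewrite !lt_neqAle p0 p1 eq_sym pn0 pn1. Qed.

Lemma near_within01_interior (p : R) (P : R -> Prop) : in01 p ->
  (\forall x \near within `[0, 1] (nbhs p), P x) -> exists2 x, 0 < x < 1 & P x.
Proof.
move=> /andP[p0 p1] /nbhs_ballP [e e0 he].
pose t := Num.min 1 e.
have t0 : 0 < t by rewrite lt_min ltr01 e0.
have t1 : t <= 1 by rewrite ge_min lexx.
have te : t <= e by rewrite ge_min lexx orbT.
have x01 : 0 < (1 - t) * p + t / 2 < 1 by apply/andP; split; nra.
exists ((1 - t) * p + t / 2) => //; apply: he.
- rewrite /ball /=.
  have -> : p - ((1 - t) * p + t / 2) = t * (p - 1/2) by field.
  rewrite normrM gtr0_norm //.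
  have : `|p - 1/2| <= 1/2 by rewrite ler_norml; apply/andP; split; lra.
  nra.
- by rewrite /= in_itv /=; case/andP: x01 => x0 x1; rewrite !ltW.
Qed.

Lemma le_within01_interior (f : R -> R) (c x : R) : in01 x ->
  f @ within `[0, 1] (nbhs x) --> f x ->
  (forall y, 0 < y < 1 -> f y <= c) -> f x <= c.
Proof.
move=> x01 fx H; rewrite leNgt; apply/negP => cfx.
have [y y01] := near_within01_interior x01 (cvgr_gt _ fx _ cfx).
by apply/negP; rewrite -leNgt H.
Qed.

Lemma cvg_within01_interior (f : R -> R) (y : R) : 0 < y < 1 ->
  f @ within `[0, 1] (nbhs y) --> f y -> f @ nbhs y --> f y.
Proof. by move=> y01; rewrite within_interior // interior_itv_bnd /= in_itv. Qed.

End UnitInterval.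

Lemma cvg_sum_ord (R : realType) (T : Type) (F : set_system T) (FF : Filter F)
    (N : nat) (f : 'I_N -> T -> R) (l : 'I_N -> R) :
  (forall n, f n @ F --> l n) ->
  (fun x => \sum_(n < N) f n x) @ F --> \sum_(n < N) l n.
Proof.
move=> fl; apply: (@cvg_big _ _ +%R 0 xpredT _ _ F (index_enum _) f l) => //.
exact: add_continuous.
Qed.

(* [a n b] and [u n b x] stand for the exponentiated losses [exp (- eta * loss)]
   of expert [n]'s prediction and of the prediction [x] on outcome [b]. *)
Section Substitution.
Variables (R : realType) (N : nat) (w : 'I_N -> R) (a : 'I_N -> bool -> R)
  (u : 'I_N -> bool -> R -> R).
Hypotheses (w_ge0 : forall n, 0 <= w n) (a_ge0 : forall n b, 0 <= a n b)
  (u_ge0 : forall n b x, in01 x -> 0 <= u n b x)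
  (u_gt0 : forall n b x, 0 < x < 1 -> 0 < u n b x)
  (u_cvg : forall n b x, in01 x -> u n b @ within `[0, 1] (nbhs x) --> u n b x)
  (a_le_u0 : forall n, a n false <= u n false 0) (u0_gt0 : forall n, 0 < u n false 0)
  (a_le_u1 : forall n, a n true <= u n true 1) (u1_gt0 : forall n, 0 < u n true 1)
  (mix_le : forall n x, in01 x ->
     (1 - x) * a n false * u n true x + x * a n true * u n false x
     <= u n false x * u n true x).

Definition ratio_sum b x := \sum_(n < N) w n * a n b / u n b x.

Let W := \sum_(n < N) w n.

(* The positivity clause lets the weight update [w n * a n b / u n b x] be
   undone by multiplying back by [u n b x]. *)
Definition admissible x := in01 x /\ forall b,
  (forall n, 0 < w n * a n b -> 0 < u n b x) /\ ratio_sum b x <= W.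

Lemma ratio_term_le_sum b x n : in01 x -> w n * a n b / u n b x <= ratio_sum b x.
Proof.
move=> x01; rewrite /ratio_sum (bigD1 n) //= lerDl; apply: sumr_ge0 => i _.
by rewrite divr_ge0 ?mulr_ge0 ?u_ge0.
Qed.

Lemma mix_ratio_sum_le x : 0 < x < 1 ->
  (1 - x) * ratio_sum false x + x * ratio_sum true x <= W.
Proof.
move=> x01; rewrite /ratio_sum !mulr_sumr -big_split /=; apply: ler_sum => n _.
have u0 := u_gt0 n false x01; have u1 := u_gt0 n true x01.
have -> : (1 - x) * (w n * a n false / u n false x) + x * (w n * a n true / u n true x)
  = w n * (((1 - x) * a n false * u n true x + x * a n true * u n false x)
      / (u n false x * u n true x)) by field; rewrite !gt_eqF.
apply: ler_piMr => //.
by rewrite ler_pdivrMr ?mulr_gt0 // mul1r mix_le //; exact: in01_oo.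
Qed.

Lemma ratio_sum_cvg b p : in01 p -> (forall n, 0 < w n * a n b -> 0 < u n b p) ->
  ratio_sum b @ within `[0, 1] (nbhs p) --> ratio_sum b p.
Proof.
move=> p01 up; apply: cvg_sum_ord => n.
have [->|wa0] := eqVneq (w n * a n b) 0.
  under eq_cvg do rewrite mul0r; rewrite mul0r; exact: cvg_cst.
apply: cvgMl_tmp; apply: cvgV; last exact: u_cvg.
by rewrite gt_eqF // up // lt_neqAle eq_sym wa0 mulr_ge0.
Qed.

Lemma ratio_sum_cvg_interior b (y : R) : 0 < y < 1 ->
  ratio_sum b @ nbhs y --> ratio_sum b y.
Proof.
move=> y01; apply: cvg_within01_interior => //.
by apply: ratio_sum_cvg; [exact: in01_oo | move=> n _; exact: u_gt0].
Qed.

(* If [u n b] vanished at [p] while [w n * a n b > 0], the ratio sum would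
   blow up near [p]. *)
Lemma u_gt0_of_ratio_sum_le b p : in01 p ->
  (forall x, 0 < x < 1 -> ratio_sum b x <= W) ->
  forall n, 0 < w n * a n b -> 0 < u n b p.
Proof.
move=> p01 H n wa0; rewrite lt_neqAle u_ge0 // andbT; apply/negP => /eqP up0.
have W1 : 0 < W + 1 by rewrite ltr_wpDl // sumr_ge0.
have small : u n b p < w n * a n b / (W + 1) by rewrite -up0 divr_gt0.
have [x x01 ux] := near_within01_interior p01 (cvgr_lt _ (@u_cvg n b p p01) _ small).
have uxg := u_gt0 n b x01.
have : W + 1 < w n * a n b / u n b x.
  by rewrite ltr_pdivlMr // mulrC -ltr_pdivlMr.
have := @ratio_term_le_sum b x n (in01_oo x01); have := H x x01; lra.
Qed.

Lemma admissible_bound_at b p : in01 p ->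
  (forall x, 0 < x < 1 -> ratio_sum b x <= W) ->
  (forall n, 0 < w n * a n b -> 0 < u n b p) /\ ratio_sum b p <= W.
Proof.
move=> p01 H; have up := u_gt0_of_ratio_sum_le p01 H.
by split=> //; apply: le_within01_interior => //; exact: ratio_sum_cvg.
Qed.

Lemma ratio_sum_le_of_le b p : (forall n, 0 < u n b p) ->
  (forall n, a n b <= u n b p) -> ratio_sum b p <= W.
Proof.
move=> up au; apply: ler_sum => n _; rewrite -mulrA; apply: ler_piMr => //.
by rewrite ler_pdivrMr // mul1r.
Qed.

Let gap x := ratio_sum true x - ratio_sum false x.

Lemma admissible_of_crossing lo hi : 0 < lo -> lo <= hi -> hi < 1 ->
  Num.min (gap lo) (gap hi) <= 0 <= Num.max (gap lo) (gap hi) ->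
  exists x, admissible x.
Proof.
move=> lo0 lohi hi1 dlh.
have in_oo y : lo <= y <= hi -> 0 < y < 1.
  by case/andP => ly yh; rewrite (lt_le_trans lo0 ly) (le_lt_trans yh hi1).
have [|y /in_oo y01 dy0] := IVT lohi _ dlh.
  apply: continuous_in_subspaceT => y; rewrite inE /= in_itv /= => /in_oo y01.
  by apply: cvgB; exact: ratio_sum_cvg_interior.
have eq_tf : ratio_sum true y = ratio_sum false y by rewrite /gap in dy0; lra.
have := mix_ratio_sum_le y01; rewrite eq_tf -mulrDl subrK mul1r => le_f.
exists y; split; first exact: in01_oo.
by move=> b; split=> [n _|]; [exact: u_gt0 | case: b; rewrite ?eq_tf].
Qed.

Lemma exists_admissible : exists x, admissible x.
Proof.
have [le_t|] := pselect (forall x, 0 < x < 1 -> ratio_sum true x <= W).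
  exists 0; split=> [|[]]; first exact: in01_0.
    exact: admissible_bound_at in01_0 le_t.
  by split=> [n _|]; [exact: u0_gt0 | exact: ratio_sum_le_of_le].
move/existsNP => [t /not_implyP [t01 /negP]]; rewrite -ltNge => Wt.
have [le_f|] := pselect (forall x, 0 < x < 1 -> ratio_sum false x <= W).
  exists 1; split=> [|[]]; first exact: in01_1.
    by split=> [n _|]; [exact: u1_gt0 | exact: ratio_sum_le_of_le].
  exact: admissible_bound_at in01_1 le_f.
move/existsNP => [f /not_implyP [f01 /negP]]; rewrite -ltNge => Wf.
case/andP: (t01) => t0 t1; case/andP: (f01) => f0 f1.
have dt : 0 < gap t by have := mix_ratio_sum_le t01; rewrite /gap subr_gt0; nra.
have df : gap f < 0 by have := mix_ratio_sum_le f01; rewrite /gap subr_lt0; nra.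
have cross : Num.min (gap t) (gap f) <= 0 <= Num.max (gap t) (gap f).
  by rewrite ge_min le_max (ltW dt) (ltW df) orbT.
have [tf|ft] := leP t f; first exact: admissible_of_crossing t0 tf f1 cross.
by apply: (admissible_of_crossing f0 (ltW ft) t1); rewrite minC maxC.
Qed.

End Substitution.

Section ProperLoss.
Variables (R : realType) (l : lossfun R).
Hypotheses (l_loss : is_loss l) (l_proper : proper_loss l).

Lemma loss_ge0 p b : in01 p -> (0 <= l p b)%E.
Proof. by case: l_loss => + _ _ _; apply. Qed.

Lemma proper_loss_fin_num p b : 0 < p < 1 -> l p b \is a fin_num.
Proof.
move=> p01; have p01' := in01_oo p01; case/andP: p01 => p0 p1.
case: l_loss => _ _ [g [g01 [fin_g0 fin_g1]]] _.
have : (p%:E * l g true + (1 - p)%:E * l g false)%E \is a fin_num.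
  by rewrite fin_numD !fin_numM.
apply: contraTT; rewrite ge0_fin_numE ?loss_ge0 // ltey negbK => /eqP lpb.
have wloss_ge0 q b' : 0 <= q -> (0 <= q%:E * l p b')%E.
  by move=> q0; rewrite mule_ge0 ?lee_fin ?loss_ge0.
have : (+oo <= p%:E * l p true + (1 - p)%:E * l p false)%E.
  case: b lpb => lpb.
  - have := leeDl (p%:E * l p true) (wloss_ge0 (1 - p) false _).
    by rewrite lpb gt0_muley ?lte_fin // subr_ge0 => /(_ (ltW p1)).
  - have := leeDr ((1 - p)%:E * l p false) (wloss_ge0 p true (ltW p0)).
    by rewrite lpb gt0_muley ?lte_fin ?subr_gt0.
by move/le_trans/(_ (l_proper p01' g01)); rewrite leye_eq => /eqP ->.
Qed.

Lemma proper_loss_le_at0 g : in01 g -> (l 0%R false <= l g false)%E.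
Proof. by move/(l_proper in01_0); rewrite !mul0e !add0e subr0 !mul1e. Qed.

Lemma proper_loss_le_at1 g : in01 g -> (l 1%R true <= l g true)%E.
Proof. by move/(l_proper in01_1); rewrite subrr !mul0e !adde0 !mul1e. Qed.

Lemma proper_loss_fin_num0 : l 0 false \is a fin_num.
Proof.
case: l_loss => _ _ [g [g01 [fin_g0 _]]] _.
rewrite ge0_fin_numE ?(loss_ge0 _ in01_0) //.
apply: le_lt_trans (proper_loss_le_at0 g01) _.
by rewrite -ge0_fin_numE ?loss_ge0.
Qed.

Lemma proper_loss_fin_num1 : l 1 true \is a fin_num.
Proof.
case: l_loss => _ _ [g [g01 [_ fin_g1]]] _.
rewrite ge0_fin_numE ?(loss_ge0 _ in01_1) //.
apply: le_lt_trans (proper_loss_le_at1 g01) _.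
by rewrite -ge0_fin_numE ?loss_ge0.
Qed.

End ProperLoss.

Section ExpLoss.
Variables (R : realType) (eta : R).
Hypothesis eta_gt0 : 0 < eta.

(* [-oo] is never a loss value, so [expeta -oo] is junk. *)
Definition expeta (x : \bar R) : R :=
  match x with EFin r => expR (- (eta * r)) | +oo%E => 0 | -oo%E => 1 end.

Lemma expeta_ge0 x : 0 <= expeta x.
Proof. by case: x => [r| |] //=; rewrite expR_ge0. Qed.

Lemma expeta_gt0 x : x \is a fin_num -> 0 < expeta x.
Proof. by case: x => [r| |] //= _; rewrite expR_gt0. Qed.

Lemma expeta_le x y : (0 <= x)%E -> (x <= y)%E -> expeta y <= expeta x.
Proof.
case: x => [r| |]; case: y => [s| |] //= _; rewrite ?expR_ge0 // lee_fin => rs.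
by rewrite ler_expR lerN2 ler_pM2l.
Qed.

Lemma expetaD x y : (0 <= x)%E -> (0 <= y)%E -> expeta (x + y) = expeta x * expeta y.
Proof.
case: x => [r| |]; case: y => [s| |] //= _ _; rewrite ?mul0r ?mulr0 //.
by rewrite mulrDr opprD expRD.
Qed.

Lemma expeta_prod (I : Type) (s : seq I) (f : I -> \bar R) :
  (forall i, 0 <= f i)%E -> \prod_(i <- s) expeta (f i) = expeta (\sum_(i <- s) f i).
Proof.
move=> f0; elim: s => [|i s IH]; first by rewrite !big_nil /= mulr0 oppr0 expR0.
by rewrite !big_cons IH expetaD // sume_ge0.
Qed.

Lemma expeta_continuous x : x != -oo%E -> {for x, continuous expeta}.
Proof.
case: x => [r| |] // _.
  have : {for r, continuous (fun y : R => expR (- (eta * y)))}.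
    apply: continuous_comp; last exact: continuous_expR.
    by apply: continuousN; apply: continuousM; [exact: cvg_cst | exact: cvg_id].
  by move/cvgrPdist_lt => near_r; apply/cvgrPdist_lt => e /near_r.
apply/(@cvgrPdist_lt _ _ _ (nbhs (+oo%E : \bar R))) => e e0 /=.
exists (- ln e / eta + 1); split; first exact: num_real.
case=> [s| |] //=; rewrite ?subrr ?normr0 // lte_fin => /ltW hs.
rewrite sub0r normrN gtr0_norm ?expR_gt0 // -[X in _ < X]lnK ?posrE // ltr_expR.
have : eta * (- ln e / eta + 1) <= eta * s by rewrite ler_pM2l.
by rewrite mulrDr mulr1 mulrCA mulfV ?gt_eqF // mulr1; have := eta_gt0; lra.
Qed.

Lemma le_of_expeta_le (c : R) (X Y : \bar R) : 0 < c -> (0 <= X)%E -> (0 <= Y)%E ->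
  expeta Y <= c * expeta X -> (X <= Y + (ln c / eta)%:E)%E.
Proof.
move=> c0; case: Y => [y| |] // + Y0; last by rewrite addye ?leey.
case: X => [x| |] //= X0; last by rewrite mulr0 leNgt expR_gt0.
rewrite -EFinD lee_fin -[X in _ <= X * _](@lnK _ c) ?posrE // -expRD ler_expR => le_eta.
by rewrite -(ler_pM2l eta_gt0) mulrDr mulrCA mulfV ?gt_eqF // mulr1; lra.
Qed.

Definition expl (l : lossfun R) b p := expeta (l p b).

Definition exp_superpred (l : lossfun R) : set (R * R) :=
  [set (expR (- (eta * q.1)), expR (- (eta * q.2))) | q in superpred l].

Lemma expl_within_cvg (l : lossfun R) b x : is_loss l -> in01 x ->
  expl l b @ within `[0, 1] (nbhs x) --> expl l b x.
Proof.
move=> l_loss x01; have : {within `[0, 1], continuous (expl l b)}.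
  apply: within_continuous_comp; last by case: l_loss => _ + _ _; apply.
  move=> _ /set_mem [p /= p01 <-]; apply: expeta_continuous.
  have : (0 <= l p b)%E by apply: loss_ge0; move: p01; rewrite in_itv.
  by case: (l p b).
by move/subspace_continuousP; apply; rewrite /= in_itv.
Qed.

Lemma expl_exp_superpred (l : lossfun R) g : is_loss l -> in01 g ->
  l g false \is a fin_num -> l g true \is a fin_num ->
  exp_superpred l (expl l false g, expl l true g).
Proof.
move=> l_loss g01 fin0 fin1.
exists (fine (l g false), fine (l g true)).
  by split; [|split]; rewrite ?fine_ge0 ?loss_ge0 //; exists g; rewrite !fineK.
by rewrite /expl -(fineK fin0) -(fineK fin1).
Qed.

(* Mixability puts the mixture of the exponentiated losses of [g] and [p]
   in the exponentiated superprediction set; properness at [p] then bounds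
   the expected loss of the mixture from below. *)
Lemma ln_mix_le (l : lossfun R) p g e : in_L l -> mixable_at eta l ->
  0 < p < 1 -> 0 < g < 1 -> 0 < e <= 1 ->
  (1 - p) * ln (e * expl l false g + (1 - e) * expl l false p)
  + p * ln (e * expl l true g + (1 - e) * expl l true p)
  <= (1 - p) * ln (expl l false p) + p * ln (expl l true p).
Proof.
case=> l_loss _ l_proper l_mix p01 g01 /andP[e0 e1].
have fin := proper_loss_fin_num l_loss l_proper.
have p01' := in01_oo p01; case/andP: (p01) => p0 p1.
have eg := expl_exp_superpred l_loss (in01_oo g01) (fin _ false g01) (fin _ true g01).
have ep := expl_exp_superpred l_loss p01' (fin _ false p01) (fin _ true p01).
have := l_mix _ _ eg ep e; rewrite /in01 (ltW e0) e1.
move=> /(_ isT) [[q0 q1]] [/= _ [_ [g' [g'01 [le_q0 le_q1]]]]].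
case=> <- <-; have := l_proper p g' p01' g'01.
rewrite /expl -(fineK (fin _ false p01)) -(fineK (fin _ true p01)) /= !expRK.
move: (fine (l p false)) (fine (l p true)) => x0 x1 le_risk.
have : p * x1 + (1 - p) * x0 <= p * q1 + (1 - p) * q0.
  rewrite -lee_fin !EFinD !EFinM; apply: le_trans; first exact: le_risk.
  by apply: leeD; apply: lee_wpmul2l => //; rewrite lee_fin ?subr_ge0; apply: ltW.
by have := eta_gt0; nra.
Qed.

Lemma mix_ratio_le_interior (l : lossfun R) p g : in_L l -> mixable_at eta l ->
  0 < p < 1 -> 0 < g < 1 ->
  (1 - p) * expl l false g * expl l true p + p * expl l true g * expl l false p
  <= expl l false p * expl l true p.
Proof.
move=> l_L l_mix p01 g01; case: (l_L) => l_loss _ l_proper.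
have pos b x : 0 < x < 1 -> 0 < expl l b x.
  by move=> x01; apply: expeta_gt0; exact: proper_loss_fin_num.
apply: mix_first_order; rewrite ?pos //; first exact: in01_oo.
by move=> e e01; exact: ln_mix_le.
Qed.

Lemma mix_ratio_le (l : lossfun R) p g : in_L l -> mixable_at eta l ->
  in01 p -> in01 g ->
  (1 - p) * expl l false g * expl l true p + p * expl l true g * expl l false p
  <= expl l false p * expl l true p.
Proof.
move=> l_L l_mix p01 g01; case: (l_L) => l_loss _ l_proper.
have expl_ge0 b x : 0 <= expl l b x by exact: expeta_ge0.
have [->|pn0] := eqVneq p 0.
  rewrite subr0 !mul0r addr0 mul1r; apply: ler_wpM2r => //.
  by apply: expeta_le; [exact: loss_ge0 in01_0 | exact: proper_loss_le_at0].
have [->|pn1] := eqVneq p 1.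
  rewrite subrr !mul0r add0r mul1r mulrC; apply: ler_wpM2l => //.
  by apply: expeta_le; [exact: loss_ge0 in01_1 | exact: proper_loss_le_at1].
pose f x := (1 - p) * expl l false x * expl l true p + p * expl l true x * expl l false p.
apply: (@le_within01_interior _ f _ g g01).
  by apply: cvgD; apply: cvgMr_tmp; apply: cvgMl_tmp; exact: expl_within_cvg.
by move=> y y01; apply: mix_ratio_le_interior => //; exact: in01_oo_neq.
Qed.
End ExpLoss.

Section AggregatingAlgorithm.
Variables (R : realType) (eta : R) (N : nat).
Hypothesis eta_gt0 : 0 < eta.

Definition expert_expl (c : experts_move R N) n b := expeta eta ((c n).2 (c n).1 b).
Definition learner_expl (c : experts_move R N) n b x := expl eta (c n).2 b x.

Definition aa_pred (w : 'I_N -> R) c : R :=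
  xget 0 (admissible w (expert_expl c) (learner_expl c)).

Definition aa_update (w : 'I_N -> R) c b x n :=
  w n * expert_expl c n b / learner_expl c n b x.

Definition aa_weights (h : seq (round R N)) : 'I_N -> R :=
  foldl (fun w r => aa_update w r.1 r.2 (aa_pred w r.1)) (fun=> 1) h.

Definition aa_strategy : strategy R N := fun h c => aa_pred (aa_weights h) c.

Lemma aa_pred_in01 w c : in01 (aa_pred w c).
Proof. by rewrite /aa_pred; case: xgetP => [x _ []|_]; last exact: in01_0. Qed.

Lemma aa_pred_admissible w c : (forall n, 0 <= w n) -> (forall n, in01 (c n).1) ->
  (forall n, in_L (c n).2 /\ mixable_at eta (c n).2) ->
  admissible w (expert_expl c) (learner_expl c) (aa_pred w c).
Proof.
move=> w_ge0 c01 cL; apply: xgetPex.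
have loss n : is_loss (c n).2 by case: (cL n).1.
have proper n : proper_loss (c n).2 by case: (cL n).1.
apply: exists_admissible => //.
- by move=> n b; exact: expeta_ge0.
- by move=> n b x _; exact: expeta_ge0.
- by move=> n b x x01; apply: expeta_gt0; exact: proper_loss_fin_num.
- by move=> n b x x01; exact: expl_within_cvg.
- move=> n; apply: expeta_le => //; last exact: proper_loss_le_at0.
  exact: (loss_ge0 (loss n) false in01_0).
- by move=> n; apply: expeta_gt0; exact: proper_loss_fin_num0.
- move=> n; apply: expeta_le => //; last exact: proper_loss_le_at1.
  exact: (loss_ge0 (loss n) true in01_1).
- by move=> n; apply: expeta_gt0; exact: proper_loss_fin_num1.
- by move=> n x x01; apply: mix_ratio_le; case: (cL n).
Qed.

Lemma aa_update_ge0 w c b x n : 0 <= w n -> 0 <= aa_update w c b x n.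
Proof. by move=> w0; rewrite divr_ge0 ?mulr_ge0 ?expeta_ge0. Qed.

Lemma aa_updateK w c b x n : 0 <= w n ->
  (0 < w n * expert_expl c n b -> 0 < learner_expl c n b x) ->
  aa_update w c b x n * learner_expl c n b x = w n * expert_expl c n b.
Proof.
rewrite /aa_update; have [->|wa0] := eqVneq (w n * expert_expl c n b) 0.
  by rewrite !mul0r.
move=> w0 up; rewrite divfK // gt_eqF // up //.
by rewrite lt_neqAle eq_sym wa0 mulr_ge0 ?expeta_ge0.
Qed.

Lemma history_rcons (gam : nat -> 'I_N -> R) (lam : nat -> 'I_N -> lossfun R)
  (om : nat -> bool) t :
  history gam lam om t.+1 =
  rcons (history gam lam om t) ((fun n => (gam t n, lam t n)), om t).
Proof. by rewrite /history -addn1 iotaD map_cat /= cats1. Qed.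

Section Play.
Variables (gam : nat -> 'I_N -> R) (lam : nat -> 'I_N -> lossfun R) (om : nat -> bool).
Hypotheses (gam01 : forall t n, in01 (gam t n))
  (lamL : forall t n, in_L (lam t n) /\ mixable_at eta (lam t n)).

Let experts_at t : experts_move R N := fun n => (gam t n, lam t n).
Let prediction t := learner_pred aa_strategy gam lam om t.
Let weights t := aa_weights (history gam lam om t).

Lemma aa_weights_S t :
  weights t.+1 = aa_update (weights t) (experts_at t) (om t) (prediction t).
Proof. by rewrite /weights history_rcons /aa_weights foldl_rcons. Qed.

Lemma aa_weights_invariant t : [/\ forall n, 0 <= weights t n,
  \sum_(n < N) weights t n <= N%:R &
  forall n, weights t n * \prod_(s < t) expeta eta (lam s n (prediction s) (om s))
            = \prod_(s < t) expeta eta (lam s n (gam s n) (om s))].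
Proof.
elim: t => [|t [w_ge0 sum_le wE]].
  by split=> [n|//|n]; rewrite ?sumr_const ?card_ord // !big_ord0 mulr1.
have [_ /(_ (om t)) [pos le_sum]] :=
  aa_pred_admissible (c := experts_at t) w_ge0 (gam01 t) (fun n => lamL t n).
rewrite aa_weights_S; split=> [n|| n]; first exact: aa_update_ge0.
  exact: le_trans le_sum sum_le.
have := aa_updateK (w_ge0 n) (pos n).
rewrite /learner_expl /expert_expl /expl /= => updK.
by rewrite !big_ord_recr /= -(wE n) mulrCA updK mulrCA mulrA.
Qed.

Lemma aa_loss_bound T n : (\sum_(t < T) lam t n (prediction t) (om t)
  <= \sum_(t < T) lam t n (gam t n) (om t) + (ln N%:R / eta)%:E)%E.
Proof.
have [w_ge0 sum_le wE] := aa_weights_invariant T.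
have loss_ge0 t p : in01 p -> (0 <= lam t n p (om t))%E.
  by move=> p01; case: (lamL t n) => -[[+ _ _ _] _ _] _; apply.
have pred_ge0 t : (0 <= lam t n (prediction t) (om t))%E.
  by apply: loss_ge0; exact: aa_pred_in01.
have gam_ge0 t : (0 <= lam t n (gam t n) (om t))%E by exact: loss_ge0.
apply: le_of_expeta_le; rewrite ?sume_ge0 //.
  by rewrite ltr0n (leq_ltn_trans _ (ltn_ord n)).
rewrite -!expeta_prod // -(wE n) ler_wpM2r ?prodr_ge0 // => [t _|].
  exact: expeta_ge0.
by apply: le_trans sum_le; rewrite (bigD1 n) //= lerDl sumr_ge0.
Qed.

End Play.

End AggregatingAlgorithm.

Theorem corollary1 (R : realType) (eta : R) (N : nat) :
  0 < eta ->
  exists S : strategy R N,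
    (forall h c, in01 (S h c)) /\
    forall (gam : nat -> 'I_N -> R) (lam : nat -> 'I_N -> lossfun R)
           (om : nat -> bool),
      (forall t n, in01 (gam t n)) ->
      (forall t n, in_L (lam t n) /\ mixable_at eta (lam t n)) ->
      forall (T : nat) (n : 'I_N), (1 <= T)%N ->
        (\sum_(t < T) lam t n (learner_pred S gam lam om t) (om t)
         <= \sum_(t < T) lam t n (gam t n) (om t) + (ln (N%:R) / eta)%:E)%E.
Proof.
move=> eta_gt0; exists (@aa_strategy R eta N).
split=> [h c|gam lam om gam01 lamL T n _]; first exact: aa_pred_in01.
exact (aa_loss_bound eta_gt0 om gam01 lamL T n).
Qed.
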